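(* Let $n\ge 1$ and $\ell\ge 0$ be integers. Let $\mathbf{M}_0,\mathbf{M}_1,\ldots,\mathbf{M}_\ell$ be $n\times n$ matrices with entries in $\{0,1\}$, let $\pi_{0,0}=1$, and let $\pi_{1,0},\ldots,\pi_{\ell,0}$ be real numbers with $0<\pi_{k,0}\le 1$ for $1\le k\le \ell$. Define $n\times n$ matrices $\mathbf{Q}_0,\ldots,\mathbf{Q}_\ell$ recursively by $$\mathbf{Q}_0=\mathbf{M}_0,\qquad \mathbf{Q}_k=\mathbf{Q}_{k-1}+\pi_{k,0}\big((\mathbf{J}^{(n)}-\mathbf{Q}_{k-1})\circ \mathbf{M}_k\big)\quad (k=1,\ldots,\ell),$$ where $\mathbf{J}^{(n)}$ is the $n\times n$ all-ones matrix and $\circ$ denotes the Hadamard (entrywise) product. Then for all $1\le i,j\le n$: (a) $0\le \mathbf{Q}_k(i,j)\le 1$ for all $0\le k\le \ell$; (b) $\mathbf{Q}_k(i,j)\ge \mathbf{Q}_{k-1}(i,j)$ for all $1\le k\le \ell$; (c) $\mathbf{Q}_\ell(i,j)=0$ if and only if $\mathbf{M}_k(i,j)=0$ for all $0\le k\le \ell$; (d) $\mathbf{Q}_\ell(i,j)=1$ if and only if there exists $k$ with $0\le k\le \ell$ such that $\mathbf{M}_k(i,j)=1$ and $\pi_{k,0}=1$; in particular, if $\mathbf{M}_0(i,j)=1$ then $\mathbf{Q}_\ell(i,j)=1$.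
   Context: Interpretation (not needed for the statement): there are $n$ users of a social network and skills $s_0,\ldots,s_\ell$, with $s_0$ the main skill; $\mathbf{M}_k$ is the adjacency matrix of the endorsement digraph for skill $s_k$ ($\mathbf{M}_k(i,j)=1$ iff user $i$ endorses user $j$ for $s_k$), and $\pi_{k,0}$ is the probability that a person skilled in $s_k$ also possesses $s_0$ (entries of the skill deduction matrix, with $\pi_{k,k}=1$). The skills $s_1,\ldots,s_\ell$ are exactly those other skills with $\pi_{k,0}>0$. $\mathbf{Q}_\ell$ is the weighted endorsement matrix for $s_0$ after endorsement deduction. *)

From mathcomp Require Import all_boot all_order all_algebra.
From mathcomp Require Import reals.
Set Implicit Arguments. Unset Strict Implicit. Unset Printing Implicit Defensive.
Import GRing.Theory Num.Theory.
Local Open Scope ring_scope.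

Definition hadamard (R : pzRingType) (m n : nat) (A B : 'M[R]_(m, n)) : 'M[R]_(m, n) :=
  map2_mx *%R A B.

Fixpoint Qmx (R : pzRingType) (n : nat) (M : nat -> 'M[R]_n) (pi : nat -> R)
    (k : nat) : 'M[R]_n :=
  match k with
  | 0 => M 0%N
  | k'.+1 => Qmx M pi k' + pi k'.+1 *: hadamard (const_mx 1 - Qmx M pi k') (M k'.+1)
  end.

From mathcomp Require Import all_boot all_order all_algebra.
From mathcomp Require Import reals.
From mathcomp Require Import ring lra.
Set Implicit Arguments. Unset Strict Implicit. Unset Printing Implicit Defensive.
Import Order.TTheory GRing.Theory Num.Theory.
Local Open Scope ring_scope.

(* The recursion is equivalent to [1 - Q_k = (1 - Q_{k-1}) (1 - pi_k M_k)],
   so entrywise [1 - Q_l] is the product of the factors [1 - pi_k M_k(i,j)],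
   each of which lies in [0, 1], equals [1] iff [M_k(i,j) = 0], and equals [0]
   iff [M_k(i,j) = 1] and [pi_k = 1]. *)

Lemma QmxSE (R : pzRingType) (n : nat) (M : nat -> 'M[R]_n) (pi : nat -> R) k i j :
  Qmx M pi k.+1 i j = Qmx M pi k i j + pi k.+1 * ((1 - Qmx M pi k i j) * M k.+1 i j).
Proof. by rewrite /= /hadamard !mxE. Qed.

Lemma oneBQmx_prod (R : comPzRingType) (n : nat) (M : nat -> 'M[R]_n)
    (pi : nat -> R) k i j :
  pi 0%N = 1 ->
  1 - Qmx M pi k i j = \prod_(0 <= t < k.+1) (1 - pi t * M t i j).
Proof.
move=> pi0; elim: k => [|k IHk]; first by rewrite big_nat1 pi0 mul1r.
by rewrite big_nat_recr //= -IHk QmxSE; ring.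
Qed.

Lemma prodr_ile1_eq1 (R : numDomainType) (I : eqType) (r : seq I) (F : I -> R) :
  (forall i, i \in r -> 0 <= F i <= 1) ->
  \prod_(i <- r) F i = 1 <-> (forall i, i \in r -> F i = 1).
Proof.
elim: r => [|a r IHr] F01; first by rewrite big_nil.
have /andP[Fa0 Fa1] := F01 a (mem_head a r).
have Fr01 i : i \in r -> 0 <= F i <= 1 by move=> ri; apply/F01/mem_behead.
have P1 : \prod_(i <- r) F i <= 1 by rewrite big_seq prodr_ile1.
rewrite big_cons; split=> [FaP1 i|Fr1].
- have Fa_eq1 : F a = 1.
    by apply/eqP; rewrite eq_le Fa1 -[leLHS]FaP1 ler_piMr.
  move: FaP1; rewrite Fa_eq1 mul1r => /(IHr Fr01) IH.
  by rewrite inE => /orP[/eqP ->|/IH].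
- rewrite Fr1 ?mem_head // mul1r.
  by apply/(IHr Fr01) => i ri; apply/Fr1/mem_behead.
Qed.

Lemma oneBpM_ge0_le1 (R : realDomainType) (p m : R) :
  0 < p <= 1 -> m = 0 \/ m = 1 -> 0 <= 1 - p * m <= 1.
Proof. by move=> /andP[? ?] [] ->; apply/andP; split; lra. Qed.

Lemma oneBpM_eq1 (R : realDomainType) (p m : R) :
  0 < p <= 1 -> m = 0 \/ m = 1 -> 1 - p * m = 1 <-> m = 0.
Proof. by move=> /andP[? ?] [] ->; split=> h; lra. Qed.

Lemma oneBpM_eq0 (R : realDomainType) (p m : R) :
  0 < p <= 1 -> m = 0 \/ m = 1 -> 1 - p * m = 0 <-> m = 1 /\ p = 1.
Proof. by move=> /andP[? ?] [] ->; split=> [h|[h1 h2]]; try split; lra. Qed.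

Lemma Qmx_le_QmxS (R : numDomainType) (n : nat) (M : nat -> 'M[R]_n) (pi : nat -> R) k i j :
  Qmx M pi k i j <= 1 -> 0 <= pi k.+1 -> 0 <= M k.+1 i j ->
  Qmx M pi k i j <= Qmx M pi k.+1 i j.
Proof. by move=> Q1 pi_ge0 M_ge0; rewrite QmxSE lerDl !mulr_ge0 // subr_ge0. Qed.

Section QmxEntry.
Variables (R : realDomainType) (n : nat) (M : nat -> 'M[R]_n) (pi : nat -> R).
Variables (k : nat) (i j : 'I_n).
Hypothesis pi0 : pi 0%N = 1.
Hypothesis pi_range : forall t, (t <= k)%N -> 0 < pi t <= 1.
Hypothesis M01 : forall t, (t <= k)%N -> M t i j = 0 \/ M t i j = 1.

Let c t := 1 - pi t * M t i j.

Let in_range t : (t <= k)%N <-> t \in index_iota 0 k.+1.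
Proof. by rewrite mem_index_iota ltnS. Qed.

Let c01 t : t \in index_iota 0 k.+1 -> 0 <= c t <= 1.
Proof. by move=> /in_range tk; apply: oneBpM_ge0_le1; [apply: pi_range | apply: M01]. Qed.

Let oneBQmx : 1 - Qmx M pi k i j = \prod_(t <- index_iota 0 k.+1) c t.
Proof. exact: oneBQmx_prod. Qed.

Lemma Qmx_ge0_le1 : 0 <= Qmx M pi k i j <= 1.
Proof.
have P0 : 0 <= \prod_(t <- index_iota 0 k.+1) c t.
  by rewrite big_seq prodr_ge0 // => t /c01 /andP[].
have P1 : \prod_(t <- index_iota 0 k.+1) c t <= 1 by rewrite big_seq prodr_ile1.
have := oneBQmx; set P := \prod_(_ <- _) _; set q := Qmx _ _ _ _ _ => qP.
by rewrite -[q](subKr 1) qP subr_ge0 gerBl P0 P1.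
Qed.

Lemma Qmx_eq0 : Qmx M pi k i j = 0 <-> (forall t, (t <= k)%N -> M t i j = 0).
Proof.
have -> : Qmx M pi k i j = 0 <-> \prod_(t <- index_iota 0 k.+1) c t = 1.
  rewrite -oneBQmx; split=> [->|c1]; first exact: subr0.
  by rewrite -[Qmx _ _ _ _ _](subKr 1) c1 subrr.
rewrite prodr_ile1_eq1 //; split=> [c1 t tk | M0 t /in_range tk].
- exact/(oneBpM_eq1 (pi_range tk) (M01 tk))/c1/in_range.
- exact/(oneBpM_eq1 (pi_range tk) (M01 tk))/M0.
Qed.

Lemma Qmx_eq1 : Qmx M pi k i j = 1 <-> exists t, (t <= k)%N /\ M t i j = 1 /\ pi t = 1.
Proof.
have -> : Qmx M pi k i j = 1 <-> \prod_(t <- index_iota 0 k.+1) c t == 0.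
  by rewrite -oneBQmx subr_eq0 eq_sym; split=> [->|/eqP].
rewrite prodf_seq_eq0; split=> [/hasP[t /in_range tk /eqP ct0]|[t [tk Mt]]].
- by exists t; split=> //; apply/(oneBpM_eq0 (pi_range tk) (M01 tk)).
- apply/hasP; exists t; first exact/in_range.
  exact/eqP/(oneBpM_eq0 (pi_range tk) (M01 tk)).
Qed.

End QmxEntry.

Theorem proposition1 (R : realType) (n l : nat) (M : nat -> 'M[R]_n) (pi : nat -> R) :
  (1 <= n)%N ->
  (forall k, (k <= l)%N -> forall i j, M k i j = 0 \/ M k i j = 1) ->
  pi 0%N = 1 ->
  (forall k, (1 <= k <= l)%N -> 0 < pi k /\ pi k <= 1) ->
  forall i j : 'I_n,
    (forall k, (k <= l)%N -> 0 <= Qmx M pi k i j /\ Qmx M pi k i j <= 1) /\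
    (forall k, (1 <= k <= l)%N -> Qmx M pi k.-1 i j <= Qmx M pi k i j) /\
    (Qmx M pi l i j = 0 <-> (forall k, (k <= l)%N -> M k i j = 0)) /\
    (Qmx M pi l i j = 1 <-> (exists k, (k <= l)%N /\ M k i j = 1 /\ pi k = 1)) /\
    (M 0%N i j = 1 -> Qmx M pi l i j = 1).
Proof.
move=> _ M01 pi0 pi01 i j.
have pi_range t : (t <= l)%N -> 0 < pi t <= 1.
  case: t => [_|t tl]; first by rewrite pi0 ltr01 lexx.
  by have [-> ->] := pi01 t.+1 tl.
have Q01 k : (k <= l)%N -> 0 <= Qmx M pi k i j <= 1.
  move=> kl; apply: Qmx_ge0_le1 => // t tk.
  - exact/pi_range/(leq_trans tk).
  - exact/M01/(leq_trans tk).
have Q1 := Qmx_eq1 pi0 pi_range (fun t tl => M01 t tl i j).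
split; first by move=> k /Q01 /andP.
split.
  case=> [//|k] /andP[_ kl]; apply: Qmx_le_QmxS.
  - by have /andP[] := Q01 k (ltnW kl).
  - by have /andP[/ltW] := pi_range _ kl.
  - by case: (M01 _ kl i j) => ->.
split; first exact: (Qmx_eq0 pi0 pi_range (fun t tl => M01 t tl i j)).
by split=> // M0; apply/Q1; exists 0%N.
Qed.
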